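(* Let $X,X_1,X_2,X_3,X_{12},X_{13},X_{23},X_{123}$ be eight points in the plane, forming a combinatorial cube. For $\{i,j,k\}=\{1,2,3\}$, the pair of opposite faces $XX_iX_{ij}X_j$ and $X_kX_{ik}X_{ijk}X_{jk}$ has four pairs of corresponding edges $(XX_i,\,X_kX_{ik})$, $(X_iX_{ij},\,X_{ik}X_{ijk})$, $(X_jX_{ij},\,X_{jk}X_{ijk})$, $(XX_j,\,X_kX_{jk})$, whose (lines') intersection points are four points. If, for some pair of opposite faces, these four intersection points of corresponding edges are collinear, then the same is true for every other pair of opposite faces.
   Context: Subscripts are unordered, so $X_{ij}=X_{ji}$ and $X_{ijk}=X_{123}$. The vertices of the combinatorial cube are indexed by subsets of $\{1,2,3\}$; edges join vertices whose index sets differ by one element, and faces are the quadrilaterals $XX_iX_{ij}X_j$ and $X_kX_{ik}X_{ijk}X_{jk}$. An edge is identified with the line through its two endpoints. The points are assumed to be in general position so that all the lines and intersection points involved are well defined. *)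

From HB Require Import structures.
From mathcomp Require Import all_boot all_order all_algebra.
Set Implicit Arguments. Unset Strict Implicit. Unset Printing Implicit Defensive.
Import Order.TTheory GRing.Theory Num.Theory.
Local Open Scope ring_scope.

Definition point (R : realFieldType) := (R * R)%type.

Definition hom (R : realFieldType) (p : point R) : R * R * R := (p.1, p.2, 1).
Definition cross (R : realFieldType) (u v : R * R * R) : R * R * R :=
  let '(u1, u2, u3) := u in let '(v1, v2, v3) := v in
  (u2 * v3 - u3 * v2, u3 * v1 - u1 * v3, u1 * v2 - u2 * v1).

Definition meet_h (R : realFieldType) (p1 p2 q1 q2 : point R) : R * R * R :=
  cross (cross (hom p1) (hom p2)) (cross (hom q1) (hom q2)).

(* the lines p1p2 and q1q2 are well defined and meet in a unique point of the plane *)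
Definition meet_ok (R : realFieldType) (p1 p2 q1 q2 : point R) : Prop :=
  (meet_h p1 p2 q1 q2).2 != 0.

Definition meet (R : realFieldType) (p1 p2 q1 q2 : point R) : point R :=
  let '(x, y, z) := meet_h p1 p2 q1 q2 in (x / z, y / z).

Definition cube (R : realFieldType) := {set 'I_3} -> point R.

(* Pairs of corresponding edges for the pair of opposite faces transversal to
   direction k: edge X_S X_{S+m} (k,m not in S, m <> k) of the face not
   containing k, and edge X_{S+k} X_{S+m+k} of the opposite face. *)
Definition corr_edge (k m : 'I_3) (S : {set 'I_3}) : bool :=
  [&& k \notin S, m \notin S & m != k].

Definition corr_meet (R : realFieldType) (X : cube R) (k m : 'I_3) (S : {set 'I_3}) :=
  meet (X S) (X (m |: S)) (X (k |: S)) (X (m |: (k |: S))).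

Definition general_position (R : realFieldType) (X : cube R) : Prop :=
  forall k m S, corr_edge k m S ->
    meet_ok (X S) (X (m |: S)) (X (k |: S)) (X (m |: (k |: S))).

Definition faces_collinear (R : realFieldType) (X : cube R) (k : 'I_3) : Prop :=
  exists a b c : R, (a != 0 \/ b != 0) /\
    forall m S, corr_edge k m S ->
      a * (corr_meet X k m S).1 + b * (corr_meet X k m S).2 + c = 0.

From Pilot Require Import Defs.
From HB Require Import structures.
From mathcomp Require Import all_boot all_order all_algebra.
From mathcomp Require Import ring.
Set Implicit Arguments. Unset Strict Implicit. Unset Printing Implicit Defensive.
Import Order.TTheory GRing.Theory Num.Theory.
Local Open Scope ring_scope.

(* In homogeneous coordinates the four points of a face pair are collinear iff
   the four 3x3 minors of their coordinate vectors vanish.  For two face pairs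
   sharing an edge direction, a polynomial identity (face_det_swap13) equates up
   to sign the minors that contain both points coming from edges of the shared
   direction; this transfers two of the four minors, and a rank argument gives
   the other two unless those two points coincide.  If they do, the same identity
   applied with the third face pair concludes, unless its two corresponding points
   coincide as well.  In that last case all edges of one direction pass through a
   point Q and all edges of another through a point Q'; a projective map sending
   Q and Q' to the points at infinity of the axes turns every face into an
   axis-parallel rectangle, up to a few degenerate shapes, and the claim becomes a
   direct computation. *)

Local Notation vec R := (R * R * R)%type.
Local Notation vcube R := (bool -> bool -> bool -> vec R).

Definition dot (R : realFieldType) (u v : vec R) : R :=
  u.1.1 * v.1.1 + u.1.2 * v.1.2 + u.2 * v.2.
Definition det3 (R : realFieldType) (u v w : vec R) : R := dot u (cross v w).
Definition scalev (R : realFieldType) (s : R) (v : vec R) : vec R :=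
  (s * v.1.1, s * v.1.2, s * v.2).
Definition vadd (R : realFieldType) (u v : vec R) : vec R :=
  (u.1.1 + v.1.1, u.1.2 + v.1.2, u.2 + v.2).
Definition meetv (R : realFieldType) (a b c d : vec R) : vec R :=
  cross (cross a b) (cross c d).
Definition lin3 (R : realFieldType) (r1 r2 r3 x : vec R) : vec R :=
  (dot r1 x, dot r2 x, dot r3 x).
Definition e1 {R : realFieldType} : vec R := (1, 0, 0).
Definition e2 {R : realFieldType} : vec R := (0, 1, 0).

Lemma vec0E (R : realFieldType) : (0 : vec R) = (0, 0, 0).
Proof. by []. Qed.

(* [destruct] cannot eliminate section variables: this tactic loops on goals
   whose vectors are section variables. *)
Ltac vec_ring :=
  rewrite ?vec0E;
  repeat match goal with u : (_ * _)%type |- _ => destruct u as [? ?] end;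
  unfold lin3, det3, meetv, scalev, vadd, e1, e2, Defs.hom, cross, dot; simpl;
  try congr (_, _, _); ring.

Section VectorAlgebra.
Variable R : realFieldType.
Implicit Types (s : R) (u v w a b c d : vec R).

Lemma scalev_eq0 s v : v != 0 -> scalev s v = 0 -> s = 0.
Proof.
case: v => [[x y] z] nz [/eqP hx /eqP hy /eqP hz]; apply/eqP; apply: contraNT nz => hs.
by move: hx hy hz; rewrite !mulf_eq0 (negbTE hs) /= => /eqP-> /eqP-> /eqP->.
Qed.

Lemma scalev_neq0 s v : s != 0 -> v != 0 -> scalev s v != 0.
Proof. by move=> hs hv; apply: contraNneq hs => /(scalev_eq0 hv)/eqP. Qed.

Lemma dot_self_eq0 v : dot v v = 0 -> v = 0.
Proof.
case: v => [[x y] z]; rewrite /dot /= => /eqP.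
have := sqr_ge0 x; have := sqr_ge0 y; have := sqr_ge0 z; rewrite !expr2 => hz hy hx.
rewrite paddr_eq0 ?addr_ge0 // paddr_eq0 //.
by rewrite !mulf_eq0 !orbb => /andP[/andP[/eqP-> /eqP->] /eqP->].
Qed.

Lemma cross0l v : cross 0 v = 0.
Proof. vec_ring. Qed.

Lemma neq0_of_z v : v.2 != 0 -> v != 0.
Proof. by apply: contra => /eqP ->. Qed.

Lemma cross_eq0C u v : cross u v = 0 -> cross v u = 0.
Proof.
have -> : cross v u = scalev (-1) (cross u v) by vec_ring.
by move->; vec_ring.
Qed.

Lemma cross_neq0C u v : cross u v != 0 -> cross v u != 0.
Proof. by apply: contra => /eqP/cross_eq0C/eqP. Qed.

Lemma det3_cycle a b c : det3 a b c = det3 b c a.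
Proof. vec_ring. Qed.

Lemma det3_swap a b c : det3 a c b = - det3 a b c.
Proof. vec_ring. Qed.

Lemma det3_cross_eq0 a b c : cross a b = 0 -> det3 a b c = 0.
Proof. by move=> h; rewrite -det3_cycle /det3 h; vec_ring. Qed.

Lemma cross_eq0_dot u v w : cross u v = 0 -> v != 0 -> dot v w = 0 -> dot u w = 0.
Proof.
move=> huv nv hvw; apply: (scalev_eq0 nv).
have -> : scalev (dot u w) v = vadd (cross (cross u v) w) (scalev (dot v w) u) by vec_ring.
by rewrite huv hvw; vec_ring.
Qed.

Lemma cross_eq0_trans u v w : cross u v = 0 -> cross v w = 0 -> v != 0 -> cross u w = 0.
Proof.
move=> huv hvw nv.
have nvv : dot v v != 0 by apply: contra nv => /eqP/dot_self_eq0/eqP.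
have : scalev (dot v v) (cross u w) =
       vadd (scalev (dot u v) (cross v w)) (cross (cross v (cross u v)) w) by vec_ring.
rewrite huv hvw; case: (cross u w) => [[x y] z].
have -> : vadd (scalev (dot u v) 0) (cross (cross v 0) w) = 0 by vec_ring.
by case=> /eqP; rewrite mulf_eq0 (negbTE nvv) => /eqP-> /eqP; rewrite mulf_eq0 (negbTE nvv)
  => /eqP-> /eqP; rewrite mulf_eq0 (negbTE nvv) => /eqP->.
Qed.

Lemma det3_orthogonal a b c v :
  v != 0 -> dot a v = 0 -> dot b v = 0 -> dot c v = 0 -> det3 a b c = 0.
Proof.
move=> nv ha hb hc; apply: (scalev_eq0 nv).
have -> : scalev (det3 a b c) v = vadd (scalev (dot a v) (cross b c))
    (vadd (scalev (dot b v) (cross c a)) (scalev (dot c v) (cross a b))) by vec_ring.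
by rewrite ha hb hc; vec_ring.
Qed.

Lemma det3_rank2 a b c d : cross a b != 0 -> det3 a b c = 0 -> det3 a b d = 0 ->
  det3 a c d = 0 /\ det3 b c d = 0.
Proof.
move=> nab hc hd; split.
- apply: (scalev_eq0 (cross_neq0C nab)).
  have -> : scalev (det3 a c d) (cross b a) = vadd (scalev (det3 a b d) (cross c a))
      (scalev (- det3 a b c) (cross d a)) by vec_ring.
  by rewrite hc hd; vec_ring.
- apply: (scalev_eq0 nab).
  have -> : scalev (det3 b c d) (cross a b) = vadd (scalev (- det3 a b d) (cross c b))
      (scalev (det3 a b c) (cross d b)) by vec_ring.
  by rewrite hc hd; vec_ring.
Qed.

End VectorAlgebra.

Section VanishingFaces.
Variable R : realFieldType.
Implicit Types (Q : vec R) (f : bool -> bool -> vec R).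

Definition vanishing_face Q (Q' : vec R) f :=
  [/\ forall a, det3 Q (f a false) (f a true) = 0,
      forall b, det3 Q' (f false b) (f true b) = 0,
      meetv (f false false) (f false true) (f true false) (f true true) != 0 &
      meetv (f false false) (f true false) (f false true) (f true true) != 0].

(* Once Q = e2 and Q' = e1 are the points at infinity of the axes, a face is an
   axis-parallel rectangle unless a vertex lies at infinity, in which case its two
   neighbours are e1 and e2 up to scale. *)
Definition grid_face f := exists (x y : bool -> R) (w : bool -> bool -> R),
  forall a b, f a b = (w a b * x a, w a b * y b, w a b).

Definition corner_face f := exists a b (s t l m : R),
  [/\ f a b = (s, t, 0), f (~~ a) b = (0, l, 0) & f a (~~ b) = (m, 0, 0)].

Lemma meetv_swap (a b c d : vec R) : meetv b a d c = meetv a b c d.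
Proof. vec_ring. Qed.

Lemma meetvC_neq0 (a b c d : vec R) : meetv a b c d != 0 -> meetv c d a b != 0.
Proof.
have -> : meetv c d a b = scalev (-1) (meetv a b c d) by vec_ring.
by apply: scalev_neq0; rewrite oppr_eq0 oner_eq0.
Qed.

Lemma vanishing_face_flip Q (Q' : vec R) f x y : vanishing_face Q Q' f ->
  vanishing_face Q Q' (fun a b => f (a (+) x) (b (+) y)).
Proof.
case=> h2 h1 nJ nL; split=> [a|b||].
- by case: y => /=; [rewrite det3_swap h2 oppr0 | rewrite h2].
- by case: x => /=; [rewrite det3_swap h1 oppr0 | rewrite h1].
- by case: x; case: y => /=; first [done | by rewrite meetv_swap | exact: meetvC_neq0
    | by rewrite meetv_swap; apply: meetvC_neq0].
- by case: x; case: y => /=; first [done | by rewrite meetv_swap | exact: meetvC_neq0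
    | by rewrite meetv_swap; apply: meetvC_neq0].
Qed.

Lemma det3_e2 (a b : vec R) : det3 e2 a b = a.2 * b.1.1 - a.1.1 * b.2.
Proof. vec_ring. Qed.

Lemma det3_e1 (a b : vec R) : det3 e1 a b = a.1.2 * b.2 - a.2 * b.1.2.
Proof. vec_ring. Qed.

Ltac absurd_meetv H := case/negP: H; apply/eqP; vec_ring.

Lemma vanishing_face_corner f :
  vanishing_face e2 e1 f -> (f false false).2 = 0 -> corner_face f.
Proof.
case=> h2 h1; move: (h2 false) (h2 true) (h1 false) (h1 true).
case E00: (f false false) => [[x0 y0] w0]; case E10: (f true false) => [[x1 y1] w1].
case E01: (f false true) => [[x2 y2] w2]; case E11: (f true true) => [[x3 y3] w3].
rewrite !det3_e2 !det3_e1 /= => hx h3 hy h4 nJ nL w00; subst w0.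
move/eqP: hx; rewrite mul0r sub0r oppr_eq0 => /eqP hx.
move/eqP: hy; rewrite mul0r subr0 => /eqP hy.
move/eqP: h3; rewrite subr_eq0 => /eqP h3; move/eqP: h4; rewrite subr_eq0 => /eqP h4.
have [w1_0|w1_nz] := eqVneq w1 0; have [w2_0|w2_nz] := eqVneq w2 0.
- subst w1 w2; move: h3 h4; rewrite !mul0r => /esym/eqP h3 /eqP h4.
  have [w3_0|w3_nz] := eqVneq w3 0; first by subst w3; absurd_meetv nJ.
  move: h3 h4; rewrite !mulf_eq0 (negbTE w3_nz) !orbF => /eqP x1_0 /eqP y2_0; subst x1 y2.
  by exists false, false, x0, y0, y1, x2; split; rewrite /= ?E10 ?E01.
- subst w1; move/eqP: hx; rewrite mulf_eq0 (negbTE w2_nz) orbF => /eqP x0_0; subst x0.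
  move: h3; rewrite mul0r => /esym/eqP; rewrite mulf_eq0 => /orP[/eqP x1_0|/eqP w3_0].
    by subst x1; absurd_meetv nL.
  subst w3; move: h4; rewrite mulr0 => /esym/eqP; rewrite mulf_eq0 (negbTE w2_nz) /= => /eqP y3_0.
  by subst y3; exists true, false, x1, y1, y0, x3; split; rewrite /= ?E10 ?E00 ?E11.
- subst w2; move/eqP: hy; rewrite mulf_eq0 (negbTE w1_nz) orbF => /eqP y0_0; subst y0.
  move: h4; rewrite mul0r => /eqP; rewrite mulf_eq0 => /orP[/eqP y2_0|/eqP w3_0].
    by subst y2; absurd_meetv nJ.
  subst w3; move: h3; rewrite mulr0 => /eqP; rewrite mulf_eq0 (negbTE w1_nz) /= => /eqP x3_0.
  by subst x3; exists false, true, x2, y2, y3, x0; split; rewrite /= ?E01 ?E11 ?E00.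
- move/eqP: hx; rewrite mulf_eq0 (negbTE w2_nz) orbF => /eqP x0_0.
  move/eqP: hy; rewrite mulf_eq0 (negbTE w1_nz) orbF => /eqP y0_0.
  by subst x0 y0; absurd_meetv nJ.
Qed.

Lemma corner_face_flip f x y :
  corner_face (fun a b => f (a (+) x) (b (+) y)) -> corner_face f.
Proof.
case=> a [b [s [t [l [m [/= E E' E'']]]]]].
by exists (a (+) x), (b (+) y), s, t, l, m; rewrite -!addNb.
Qed.

Lemma mul_div_rel (W X p r : R) : W != 0 -> W * p = X * r -> p = r * (X / W).
Proof. by move=> nW h; rewrite mulrA (mulrC r) -h mulrAC mulfV // mul1r. Qed.

Lemma vanishing_face_shape f : vanishing_face e2 e1 f -> grid_face f \/ corner_face f.
Proof.
move=> hf; have [[a b] /= /eqP w0|nz] := pickP (fun ab : bool * bool => (f ab.1 ab.2).2 == 0).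
  right; apply: (@corner_face_flip f a b); apply: vanishing_face_corner.
    exact: vanishing_face_flip.
  exact: w0.
left; have {}nz a b : (f a b).2 != 0 by rewrite (nz (a, b)).
case: hf => h2 h1 _ _.
have hx a b : (f a b).1.1 = (f a b).2 * ((f a false).1.1 / (f a false).2).
  apply: mul_div_rel (nz a false) _; case: b; last by rewrite mulrC.
  by move/eqP: (h2 a); rewrite det3_e2 subr_eq0 => /eqP.
have hy a b : (f a b).1.2 = (f a b).2 * ((f false b).1.2 / (f false b).2).
  apply: mul_div_rel (nz false b) _; case: a; last by rewrite mulrC.
  by move/eqP: (h1 b); rewrite det3_e1 subr_eq0 => /eqP.
exists (fun a => (f a false).1.1 / (f a false).2), (fun b => (f false b).1.2 / (f false b).2).
exists (fun a b => (f a b).2) => a b.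
by rewrite -hx -hy; case: (f a b) => [[]].
Qed.

End VanishingFaces.

Definition swap12 T (u : bool -> bool -> bool -> T) a b c := u b a c.
Definition swap13 T (u : bool -> bool -> bool -> T) a b c := u c b a.
(* The meet of the second-direction edges at first coordinate [a] of the two faces
   transversal to the third direction; together with [edge_meet (swap12 u) b]
   these are the four points of that face pair. *)
Definition edge_meet (R : realFieldType) (u : vcube R) a :=
  meetv (u a false false) (u a true false) (u a false true) (u a true true).

Lemma normal_cube_collinear (R : realFieldType) (u : vcube R) :
  (forall c, vanishing_face e2 e1 (fun a b => u a b c)) ->
  det3 e2 (edge_meet (swap12 (swap13 u)) false) (edge_meet (swap12 (swap13 u)) true) = 0.
Proof.
move=> hu; rewrite /edge_meet /swap12 /swap13.
have shape c := vanishing_face_shape (hu c).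
case: (shape false) => [[x [y [w /= E]]] | [[] [[] [s [t [l [m [/= E1 E2 E3]]]]]]]];
  first [rewrite !E | rewrite E1 E2 E3];
case: (shape true) => [[x' [y' [w' /= F]]] | [[] [[] [s' [t' [l' [m' [/= F1 F2 F3]]]]]]]];
  first [rewrite !F | rewrite F1 F2 F3];
repeat match goal with |- context [u ?a ?b ?c] => case: (u a b c) => [[? ?] ?] end;
vec_ring.
Qed.

Section Projective.
Variable R : realFieldType.
Implicit Types (s : R) (x y z Q v n : vec R).

Lemma det3_scalevl s (a b c : vec R) : det3 (scalev s a) b c = s * det3 a b c.
Proof. vec_ring. Qed.

Lemma det3_scalevr s (a b c : vec R) : det3 a (scalev s b) c = s * det3 a b c.
Proof. vec_ring. Qed.

Lemma det3_scalevrr s (a b c : vec R) : det3 a b (scalev s c) = s * det3 a b c.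
Proof. vec_ring. Qed.

Lemma cross_orthogonal_parallel (a b : vec R) x :
  dot a x = 0 -> dot b x = 0 -> cross (cross a b) x = 0.
Proof.
have -> : cross (cross a b) x = vadd (scalev (dot a x) b) (scalev (- dot b x) a) by vec_ring.
by move=> -> ->; vec_ring.
Qed.

Lemma lines_through_eq Q v n (s1 s2 : vec R) : cross v Q != 0 -> cross n Q != 0 ->
  det3 Q v n = 0 -> det3 Q v s1 = 0 -> det3 Q n s2 = 0 ->
  cross (cross v s1) (cross n s2) = 0.
Proof.
move=> nv nn hvn h1 h2.
have ev : cross (cross v s1) (cross v Q) = scalev (det3 Q v s1) v by vec_ring.
have eQ : cross (cross v Q) (cross n Q) = scalev (det3 Q v n) Q by vec_ring.
have en : cross (cross n Q) (cross n s2) = scalev (- det3 Q n s2) n by vec_ring.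
rewrite h1 in ev; rewrite hvn in eQ; rewrite h2 oppr0 in en.
apply: (cross_eq0_trans _ _ nn); last by rewrite en; vec_ring.
by apply: (cross_eq0_trans _ _ nv); [rewrite ev | rewrite eQ]; vec_ring.
Qed.

Lemma vanishing_face_degenerate Q f : Q != 0 -> vanishing_face Q Q f ->
  (cross (f false false) Q = 0 /\ cross (f true true) Q = 0) \/
  (cross (f true false) Q = 0 /\ cross (f false true) Q = 0).
Proof.
move=> nQ [h2 h1 nJ nL].
have h1' (b : bool) : det3 Q (f true b) (f false b) = 0 by rewrite det3_swap h1 oppr0.
have [e00|n00] := eqVneq (cross (f false false) Q) 0.
- left; split=> //.
  have n10 : cross (f true false) Q != 0.
    apply: contraNneq nL => e10; rewrite /meetv.
    by rewrite (cross_eq0_trans e00 (cross_eq0C e10) nQ) cross0l.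
  apply/eqP; apply: contraNT nL => n11; rewrite -meetv_swap /meetv.
  by rewrite (lines_through_eq n10 n11 (h2 true) (h1' false) (h1' true)).
- right; split; apply/eqP.
  + apply: contraNT nJ => n10; rewrite /meetv.
    by rewrite (lines_through_eq n00 n10 (h1 false) (h2 false) (h2 true)).
  + apply: contraNT nL => n01; rewrite /meetv.
    by rewrite (lines_through_eq n00 n01 (h2 false) (h1 false) (h1 true)).
Qed.

Lemma meetv_on_lines Q (a b c d : vec R) :
  det3 Q a b = 0 -> det3 Q c d = 0 -> cross (meetv a b c d) Q = 0.
Proof.
have dotE x y : dot (cross x y) Q = det3 Q x y by vec_ring.
by move=> h1 h2; apply: cross_orthogonal_parallel; rewrite dotE.
Qed.

Lemma degenerate_cube_collinear Q (u : vcube R) : Q != 0 ->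
  (forall c, vanishing_face Q Q (fun a b => u a b c)) ->
  det3 Q (edge_meet (swap12 (swap13 u)) false) (edge_meet (swap12 (swap13 u)) true) = 0.
Proof.
move=> nQ hu; rewrite /edge_meet /swap12 /swap13 /=.
have onQ x y : cross x Q = 0 -> det3 Q x y = 0 /\ det3 Q y x = 0.
  move=> /cross_eq0C/(det3_cross_eq0 y) hxy.
  by split=> //; rewrite det3_swap hxy oppr0.
suff [[] hK] : exists b : bool,
    cross (meetv (u false b false) (u false b true) (u true b false) (u true b true)) Q = 0.
- by rewrite det3_swap det3_cross_eq0 ?oppr0 // cross_eq0C.
- by rewrite det3_cross_eq0 // cross_eq0C.
case: (vanishing_face_degenerate nQ (hu false)) => /= [[a0 b0]|[a0 b0]];
case: (vanishing_face_degenerate nQ (hu true)) => /= [[a1 b1]|[a1 b1]].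
- by exists false; rewrite /meetv (cross_eq0_trans a0 (cross_eq0C a1) nQ) !cross0l.
- by exists false; apply: meetv_on_lines; [exact: (onQ _ _ a0).1 | exact: (onQ _ _ a1).2].
- by exists false; apply: meetv_on_lines; [exact: (onQ _ _ a1).2 | exact: (onQ _ _ a0).1].
- by exists true; rewrite /meetv (cross_eq0_trans b0 (cross_eq0C b1) nQ) !cross0l.
Qed.

Lemma cross_lin3 (r1 r2 r3 : vec R) x y :
  cross (lin3 r1 r2 r3 x) (lin3 r1 r2 r3 y) =
  lin3 (cross r2 r3) (cross r3 r1) (cross r1 r2) (cross x y).
Proof. vec_ring. Qed.

Lemma lin3_cofactor (r1 r2 r3 : vec R) x :
  lin3 (cross (cross r3 r1) (cross r1 r2)) (cross (cross r1 r2) (cross r2 r3))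
       (cross (cross r2 r3) (cross r3 r1)) x = scalev (det3 r1 r2 r3) (lin3 r1 r2 r3 x).
Proof. vec_ring. Qed.

Lemma meetv_lin3 (r1 r2 r3 a b c d : vec R) :
  meetv (lin3 r1 r2 r3 a) (lin3 r1 r2 r3 b) (lin3 r1 r2 r3 c) (lin3 r1 r2 r3 d) =
  scalev (det3 r1 r2 r3) (lin3 r1 r2 r3 (meetv a b c d)).
Proof. by rewrite /meetv !cross_lin3 lin3_cofactor. Qed.

Lemma det3_lin3 (r1 r2 r3 : vec R) x y z :
  det3 (lin3 r1 r2 r3 x) (lin3 r1 r2 r3 y) (lin3 r1 r2 r3 z) = det3 r1 r2 r3 * det3 x y z.
Proof. vec_ring. Qed.

Lemma lin3_neq0 (r1 r2 r3 : vec R) x :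
  det3 r1 r2 r3 != 0 -> x != 0 -> lin3 r1 r2 r3 x != 0.
Proof.
move=> hr hx; apply: contra hr => /eqP [h1 h2 h3]; apply/eqP.
exact: det3_orthogonal hx h1 h2 h3.
Qed.

(* The first and last rows are orthogonal to Q and the last two to Q', so Q and Q'
   are sent to the points at infinity of the axes. *)
Definition normalizer (Q Q' : vec R) : vec R -> vec R :=
  lin3 (cross Q (cross Q' Q)) (cross (cross Q' Q) Q') (cross Q' Q).

Lemma normalizerQ Q (Q' : vec R) :
  normalizer Q Q' Q = scalev (dot (cross Q' Q) (cross Q' Q)) e2.
Proof. rewrite /normalizer; vec_ring. Qed.

Lemma normalizerQ' Q (Q' : vec R) :
  normalizer Q Q' Q' = scalev (dot (cross Q' Q) (cross Q' Q)) e1.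
Proof. rewrite /normalizer; vec_ring. Qed.

Lemma det3_normalizer_rows Q (Q' : vec R) :
  det3 (cross Q (cross Q' Q)) (cross (cross Q' Q) Q') (cross Q' Q) =
  (dot (cross Q' Q) (cross Q' Q)) ^+ 2.
Proof. vec_ring. Qed.

Lemma det3_normalizer Q (Q' : vec R) x y z :
  det3 (normalizer Q Q' x) (normalizer Q Q' y) (normalizer Q Q' z) =
  (dot (cross Q' Q) (cross Q' Q)) ^+ 2 * det3 x y z.
Proof. by rewrite det3_lin3 det3_normalizer_rows. Qed.

Lemma meetv_normalizer Q (Q' : vec R) (a b c d : vec R) :
  meetv (normalizer Q Q' a) (normalizer Q Q' b) (normalizer Q Q' c) (normalizer Q Q' d) =
  scalev ((dot (cross Q' Q) (cross Q' Q)) ^+ 2) (normalizer Q Q' (meetv a b c d)).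
Proof. by rewrite meetv_lin3 det3_normalizer_rows. Qed.

Section Normalization.
Variables Q Q' : vec R.
Hypothesis nQQ' : cross Q Q' != 0.
Local Notation M := (normalizer Q Q').
Local Notation s := (dot (cross Q' Q) (cross Q' Q)).

Let ns : s != 0.
Proof. by apply: contra nQQ' => /eqP/dot_self_eq0/cross_eq0C/eqP. Qed.

Let M_incidence P E x y : M P = scalev s E -> det3 P x y = 0 -> det3 E (M x) (M y) = 0.
Proof.
move=> hP h; have := det3_normalizer Q Q' P x y.
by rewrite hP det3_scalevl h mulr0 => /eqP; rewrite mulf_eq0 (negbTE ns) => /eqP.
Qed.

Let M_meetv_neq0 (a b c d : vec R) :
  meetv a b c d != 0 -> meetv (M a) (M b) (M c) (M d) != 0.
Proof.
move=> h; rewrite meetv_normalizer; apply: scalev_neq0; first by rewrite expf_neq0.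
by apply: lin3_neq0 _ h; rewrite det3_normalizer_rows expf_neq0.
Qed.

Lemma vanishing_face_normalize f :
  vanishing_face Q Q' f -> vanishing_face e2 e1 (fun a b => M (f a b)).
Proof.
case=> h2 h1 nJ nL; split=> [a|b||] /=.
- exact: M_incidence (normalizerQ Q Q') (h2 a).
- exact: M_incidence (normalizerQ' Q Q') (h1 b).
- exact: M_meetv_neq0.
- exact: M_meetv_neq0.
Qed.

Lemma normalized_cube_collinear (u : vcube R) :
  (forall c, vanishing_face Q Q' (fun a b => u a b c)) ->
  det3 Q (edge_meet (swap12 (swap13 u)) false) (edge_meet (swap12 (swap13 u)) true) = 0.
Proof.
move=> hu; have := @normal_cube_collinear _ (fun a b c => M (u a b c))
  (fun c => vanishing_face_normalize (hu c)).
rewrite /edge_meet /swap12 /swap13 /= !meetv_normalizer det3_scalevr det3_scalevrr.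
move=> /eqP; rewrite !mulf_eq0 (negbTE ns) /= => /eqP hK.
have := det3_normalizer Q Q' Q (meetv (u false false false) (u false false true)
  (u true false false) (u true false true)) (meetv (u false true false) (u false true true)
  (u true true false) (u true true true)).
by rewrite normalizerQ det3_scalevl hK mulr0 => /esym/eqP; rewrite !mulf_eq0 (negbTE ns) => /eqP.
Qed.

End Normalization.

Lemma concurrent_edges_collinear (Q Q' : vec R) (u : vcube R) :
  Q != 0 -> Q' != 0 -> (forall c, vanishing_face Q Q' (fun a b => u a b c)) ->
  det3 Q (edge_meet (swap12 (swap13 u)) false) (edge_meet (swap12 (swap13 u)) true) = 0.
Proof.
move=> nQ nQ' hu; have [QQ'|nQQ'] := eqVneq (cross Q Q') 0; last first.
  exact: (normalized_cube_collinear nQQ' hu).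
apply: degenerate_cube_collinear nQ _ => c.
by case: (hu c) => h2 h1 nJ nL; split=> // b; apply: cross_eq0_dot QQ' nQ' (h1 b).
Qed.

End Projective.

Section FacePairs.
Variable R : realFieldType.
Implicit Types (u : vcube R).

Definition face_det u b :=
  det3 (edge_meet u false) (edge_meet u true) (edge_meet (swap12 u) b).

Definition hcollinear (a b c d : vec R) :=
  [/\ det3 a b c = 0, det3 a b d = 0, det3 a c d = 0 & det3 b c d = 0].

Definition face_pair_collinear u :=
  hcollinear (edge_meet u false) (edge_meet u true)
             (edge_meet (swap12 u) false) (edge_meet (swap12 u) true).

Lemma face_det_swap13 u b : face_det (swap13 u) b = - face_det u b.
Proof.
rewrite /face_det /edge_meet /swap12 /swap13 /=.
case: b; move: (u false false false) (u true false false) (u false true false)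
  (u true true false) (u false false true) (u true false true) (u false true true)
  (u true true true) => ? ? ? ? ? ? ? ?; vec_ring.
Qed.

Lemma det3_meetvl (a b c d : vec R) : det3 (meetv a b c d) a b = 0.
Proof. vec_ring. Qed.

Lemma det3_meetvr (a b c d : vec R) : det3 (meetv a b c d) c d = 0.
Proof. vec_ring. Qed.

Lemma cross_cross_concurrent (l1 l2 l3 l4 : vec R) :
  cross (cross l1 l2) (cross l3 l4) = 0 -> cross l1 l2 != 0 -> cross l3 l4 != 0 ->
  cross (cross l1 l3) (cross l2 l4) = 0.
Proof.
move=> h n12 n34.
have dotC (x y : vec R) : dot x y = dot y x by vec_ring.
have on12 (x y : vec R) : dot x (cross x y) = 0 /\ dot y (cross x y) = 0 by split; vec_ring.
have on34 (x : vec R) : dot x (cross l3 l4) = 0 -> dot x (cross l1 l2) = 0.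
  by rewrite !(dotC x); apply: cross_eq0_dot.
have e13 : cross (cross l1 l3) (cross l1 l2) = 0.
  by apply: cross_orthogonal_parallel; [exact: (on12 _ _).1 | apply: on34; exact: (on12 _ _).1].
have e24 : cross (cross l2 l4) (cross l1 l2) = 0.
  by apply: cross_orthogonal_parallel; [exact: (on12 _ _).2 | apply: on34; exact: (on12 _ _).2].
exact: cross_eq0_trans e13 (cross_eq0C e24) n12.
Qed.

Section Transfer.
Variable u : vcube R.
Hypothesis nJ : forall c, edge_meet (swap13 u) c != 0.
Hypothesis nB : forall b, edge_meet (swap12 u) b != 0.
Hypothesis nL : forall c, edge_meet (swap13 (swap12 u)) c != 0.
Hypothesis hu : face_pair_collinear u.

(* A, B are the points of the face pair of [u] transversal to the third
   direction, J, K those of the pair transversal to the first direction and L, N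
   those of the pair transversal to the second one. *)
Local Notation A a := (edge_meet u a).
Local Notation B b := (edge_meet (swap12 u) b).
Local Notation J c := (edge_meet (swap13 u) c).
Local Notation K b := (edge_meet (swap12 (swap13 u)) b).
Local Notation L c := (edge_meet (swap13 (swap12 u)) c).
Local Notation N a := (edge_meet (swap12 (swap13 (swap12 u))) a).

Let det3_JJK b : det3 (J false) (J true) (K b) = 0.
Proof.
have := face_det_swap13 u b; rewrite /face_det => ->.
by case: hu b => d1 d2 _ _ [|]; rewrite ?d1 ?d2 oppr0.
Qed.

Let det3_JKK_via_third_pair :
  cross (B false) (B true) != 0 -> det3 (J false) (K false) (K true) = 0.
Proof.
move=> nBB; case: hu => _ _ d3 d4.
have LLN a : det3 (L false) (L true) (N a) = 0.
  have E : det3 (L false) (L true) (N a) = - det3 (B false) (B true) (A a) :=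
    face_det_swap13 (swap12 u) a.
  by case: a E => ->; rewrite -det3_cycle ?d3 ?d4 oppr0.
have nLL : cross (L false) (L true) != 0.
  apply: contra nBB => /eqP LL; apply/eqP; move: LL (nL false) (nL true).
  exact: cross_cross_concurrent.
have [LNN _] := det3_rank2 nLL (LLN false) (LLN true).
have E : det3 (N false) (N true) (L false) = - det3 (K false) (K true) (J false) :=
  face_det_swap13 (swap12 (swap13 u)) false.
by rewrite det3_cycle -[LHS]opprK -E -det3_cycle LNN oppr0.
Qed.

Let det3_JKK_concurrent : cross (J false) (J true) = 0 -> cross (B false) (B true) = 0 ->
  det3 (J false) (K false) (K true) = 0.
Proof.
move=> JJ BB; apply: concurrent_edges_collinear (nJ false) (nB false) _ => c.
have onB b : det3 (B b) (u false b c) (u true b c) = 0.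
  by case: c; [apply: det3_meetvr | apply: det3_meetvl].
have onJ a : det3 (J c) (u a false c) (u a true c) = 0.
  by case: a; [apply: det3_meetvr | apply: det3_meetvl].
split=> [a|b||]; [| |exact: nJ|exact: nL].
- by case: c onB onJ => _ onJ; [apply: cross_eq0_dot JJ (nJ true) _ |]; apply: onJ.
- by case: b onB => onB; [apply: cross_eq0_dot BB (nB true) _ |]; apply: onB.
Qed.

Lemma face_pair_collinear_swap13 : face_pair_collinear (swap13 u).
Proof.
have JKK : det3 (J false) (K false) (K true) = 0.
  have [JJ|nJJ] := eqVneq (cross (J false) (J true)) 0; last first.
    by case: (det3_rank2 nJJ (det3_JJK false) (det3_JJK true)).
  have [BB|nBB] := eqVneq (cross (B false) (B true)) 0.
    exact: det3_JKK_concurrent.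
  exact: det3_JKK_via_third_pair.
split; [exact: det3_JJK | exact: det3_JJK | exact: JKK |].
have [JJ|nJJ] := eqVneq (cross (J false) (J true)) 0.
  exact: cross_eq0_dot (cross_eq0C JJ) (nJ false) JKK.
by case: (det3_rank2 nJJ (det3_JJK false) (det3_JJK true)).
Qed.

End Transfer.
End FacePairs.

Section AffineCollinearity.
Variable R : realFieldType.
Implicit Types (h : vec R).

Definition dehom h : point R := (h.1.1 / h.2, h.1.2 / h.2).

Lemma meet_dehom (p1 p2 q1 q2 : point R) : meet p1 p2 q1 q2 = dehom (meet_h p1 p2 q1 q2).
Proof. by rewrite /meet; case: (meet_h _ _ _ _) => [[x y] z]. Qed.

Lemma dehom_on_line h (a b c : R) : h.2 != 0 ->
  a * (dehom h).1 + b * (dehom h).2 + c = 0 <-> dot h (a, b, c) = 0.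
Proof.
case: h => [[x y] z] /= nz; rewrite /dot /=.
have -> : x * a + y * b + z * c = z * (a * (x / z) + b * (y / z) + c) by field.
by split=> [->|/eqP]; rewrite ?mulr0 // mulf_eq0 (negbTE nz) => /eqP.
Qed.

Lemma finite_line h (l : vec R) : h.2 != 0 -> l != 0 -> dot h l = 0 ->
  l.1.1 != 0 \/ l.1.2 != 0.
Proof.
case: l => [[a b] c] nh nl hl; case: (eqVneq a 0) => [a0|]; last by left.
case: (eqVneq b 0) => [b0|]; last by right.
move: hl nl; rewrite a0 b0 /dot /= !mulr0 !add0r => /eqP.
by rewrite mulf_eq0 (negbTE nh) /= => /eqP ->; rewrite eqxx.
Qed.

Lemma hcollinear_common_line (h1 h2 h3 h4 : vec R) : h1.2 != 0 ->
  hcollinear h1 h2 h3 h4 -> exists2 l : vec R, l != 0 &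
  [/\ dot h1 l = 0, dot h2 l = 0, dot h3 l = 0 & dot h4 l = 0].
Proof.
move=> nz1 [d123 d124 d134 _].
have nh1 := neq0_of_z nz1.
have on_cross (x y : vec R) : dot x (cross x y) = 0 /\ dot y (cross x y) = 0 by split; vec_ring.
have det3E (x y z : vec R) : dot z (cross x y) = det3 x y z by vec_ring.
have par x l : cross x h1 = 0 -> dot h1 l = 0 -> dot x l = 0.
  by move=> hx; apply: cross_eq0_dot hx nh1.
have [h12|n12] := eqVneq (cross h1 h2) 0; last first.
  exists (cross h1 h2) => //; split; [exact: (on_cross _ _).1 | exact: (on_cross _ _).2
  | by rewrite det3E d123 | by rewrite det3E d124].
have p2 := par _ _ (cross_eq0C h12).
have [h13|n13] := eqVneq (cross h1 h3) 0; last first.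
  exists (cross h1 h3) => //; split; [exact: (on_cross _ _).1 | exact/p2/(on_cross _ _).1
  | exact: (on_cross _ _).2 | by rewrite det3E d134].
have p3 := par _ _ (cross_eq0C h13).
have [h14|n14] := eqVneq (cross h1 h4) 0; last first.
  exists (cross h1 h4) => //; split; [exact: (on_cross _ _).1 | exact/p2/(on_cross _ _).1
  | exact/p3/(on_cross _ _).1 | exact: (on_cross _ _).2].
have l1 : dot h1 (h1.2, 0, - h1.1.1) = 0 by vec_ring.
exists (h1.2, 0, - h1.1.1); first by apply: contra nz1 => /eqP [->].
by split; [| exact: p2 | exact: p3 | exact: par (cross_eq0C h14) _].
Qed.

End AffineCollinearity.

Definition vertex_set (k1 k2 k3 : 'I_3) (a b c : bool) : {set 'I_3} :=
  [set i | [|| (i == k1) && a, (i == k2) && b | (i == k3) && c]].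

Definition hcube (R : realFieldType) (X : cube R) k1 k2 k3 a b c : vec R :=
  Defs.hom (X (vertex_set k1 k2 k3 a b c)).

Lemma vertex_set_swap13 k1 k2 k3 a b c :
  vertex_set k3 k2 k1 a b c = vertex_set k1 k2 k3 c b a.
Proof.
apply/setP=> i; rewrite !inE.
by case: (i == k1); case: (i == k2); case: (i == k3); case: a; case: b; case: c.
Qed.

Lemma face_pair_collinear_ext (R : realFieldType) (u v : vcube R) :
  (forall a b c, u a b c = v a b c) -> face_pair_collinear u -> face_pair_collinear v.
Proof. by move=> e; rewrite /face_pair_collinear /edge_meet /swap12 !e. Qed.

Lemma third_index (k k' : 'I_3) : k != k' ->
  exists j, [/\ k' != j, k' != k, j != k & forall i, [|| i == k', i == j | i == k]].
Proof.
move: k k' => [[|[|[|//]]] ?] [[|[|[|//]]] ?] //= _.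
all: [> exists (Ordinal (isT : (2 < 3)%N)) | exists (Ordinal (isT : (1 < 3)%N))
     | exists (Ordinal (isT : (2 < 3)%N)) | exists (Ordinal (isT : (0 < 3)%N))
     | exists (Ordinal (isT : (1 < 3)%N)) | exists (Ordinal (isT : (0 < 3)%N)) ].
all: by split=> //; case=> [[|[|[|//]]] ?].
Qed.

Section FacePairOfCube.
Variables (R : realFieldType) (X : cube R) (k1 k2 k3 : 'I_3).
Hypotheses (n12 : k1 != k2) (n13 : k1 != k3) (n23 : k2 != k3).
Hypothesis cover : forall i, [|| i == k1, i == k2 | i == k3].

Local Notation vs := (vertex_set k1 k2 k3).
Local Notation p := (hcube X k1 k2 k3).

Let eqE : ((k1 == k2) = false) * ((k2 == k1) = false) * ((k1 == k3) = false) *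
  ((k3 == k1) = false) * ((k2 == k3) = false) * ((k3 == k2) = false).
Proof.
by rewrite (eq_sym k2 k1) (eq_sym k3 k1) (eq_sym k3 k2) (negbTE n12) (negbTE n13) (negbTE n23).
Qed.

Ltac corr_edgeE := by rewrite /corr_edge !inE ?eqxx ?eqE ?andbF.

Ltac vertex_setE :=
  let i := fresh "i" in apply/setP=> i; rewrite !inE;
  case/or3P: (cover i) => /eqP ->; rewrite ?eqxx ?eqE /= ?orbT ?orbF ?andbF.

Lemma vertex_set1 a b c : k1 |: vs a b c = vs true b c.
Proof. by vertex_setE. Qed.

Lemma vertex_set2 a b c : k2 |: vs a b c = vs a true c.
Proof. by vertex_setE. Qed.

Lemma vertex_set3 a b c : k3 |: vs a b c = vs a b true.
Proof. by vertex_setE. Qed.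

Lemma corr_edge_vertex_set m S : corr_edge k3 m S ->
  (m = k2 /\ exists a, S = vs a false false) \/ (m = k1 /\ exists b, S = vs false b false).
Proof.
case/and3P=> k3S mS mk3.
case/or3P: (cover m) => /eqP em; subst m; [right | left | by rewrite eqxx in mk3].
- split=> //; exists (k2 \in S); vertex_setE; by rewrite ?(negbTE k3S) ?(negbTE mS).
- split=> //; exists (k1 \in S); vertex_setE; by rewrite ?(negbTE k3S) ?(negbTE mS).
Qed.

Lemma corr_meet_edge2 a : corr_meet X k3 k2 (vs a false false) = dehom (edge_meet p a).
Proof. by rewrite /corr_meet vertex_set3 !vertex_set2 meet_dehom. Qed.

Lemma corr_meet_edge1 b : corr_meet X k3 k1 (vs false b false) = dehom (edge_meet (swap12 p) b).
Proof. by rewrite /corr_meet vertex_set3 !vertex_set1 meet_dehom. Qed.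

Lemma general_position_hcube : general_position X ->
  [/\ forall a, (edge_meet p a).2 != 0, forall b, (edge_meet (swap12 p) b).2 != 0,
       forall c, (edge_meet (swap13 p) c).2 != 0 &
       forall c, (edge_meet (swap13 (swap12 p)) c).2 != 0].
Proof.
move=> gp; split=> x.
- move: (gp k3 k2 (vs x false false)); rewrite /meet_ok vertex_set3 !vertex_set2; apply.
  corr_edgeE.
- move: (gp k3 k1 (vs false x false)); rewrite /meet_ok vertex_set3 !vertex_set1; apply.
  corr_edgeE.
- move: (gp k1 k2 (vs false false x)); rewrite /meet_ok vertex_set1 !vertex_set2; apply.
  corr_edgeE.
- move: (gp k2 k1 (vs false false x)); rewrite /meet_ok vertex_set2 !vertex_set1; apply.
  corr_edgeE.
Qed.

Lemma faces_collinear_hcube : general_position X ->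
  faces_collinear X k3 <-> face_pair_collinear p.
Proof.
case/general_position_hcube=> okA okB _ _; split.
- case=> a [b [c [nab on_l]]].
  have nl : (a, b, c) != 0 :> vec R.
    by apply/eqP => -[a0 b0 _]; case: nab; rewrite ?a0 ?b0 eqxx.
  have onA x : dot (edge_meet p x) (a, b, c) = 0.
    apply/(dehom_on_line _ _ _ (okA x)); rewrite -corr_meet_edge2; apply: on_l.
    corr_edgeE.
  have onB y : dot (edge_meet (swap12 p) y) (a, b, c) = 0.
    apply/(dehom_on_line _ _ _ (okB y)); rewrite -corr_meet_edge1; apply: on_l.
    corr_edgeE.
  by split; apply: (det3_orthogonal nl).
- case/(hcollinear_common_line (okA false)) => -[[a b] c] nl [l1 l2 l3 l4].
  exists a, b, c; split; first exact: finite_line (okA false) nl l1.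
  move=> m S /corr_edge_vertex_set [[-> [x ->]] | [-> [y ->]]].
  + by rewrite corr_meet_edge2 dehom_on_line //; case: x.
  + by rewrite corr_meet_edge1 dehom_on_line //; case: y.
Qed.

End FacePairOfCube.

Theorem theorem3 (R : realFieldType) (X : cube R) :
  general_position X ->
  forall k k' : 'I_3, faces_collinear X k -> faces_collinear X k'.
Proof.
move=> gp k k' hk; have [<- //|nkk'] := eqVneq k k'.
have [j [nk'j nk'k njk cover]] := third_index nkk'.
have [_ okB okJ okL] := general_position_hcube nk'j nk'k njk cover gp.
have hp := (faces_collinear_hcube nk'j nk'k njk cover gp).1 hk.
have hq := face_pair_collinear_swap13 (fun c => neq0_of_z (okJ c))
  (fun b => neq0_of_z (okB b)) (fun c => neq0_of_z (okL c)) hp.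
have cover' i : [|| i == k, i == j | i == k'] by case/or3P: (cover i) => ->; rewrite ?orbT.
have [nkj njk'] : k != j /\ j != k' by split; rewrite eq_sym.
apply/(faces_collinear_hcube nkj nkk' njk' cover' gp).
apply: face_pair_collinear_ext hq => a b c.
by rewrite /swap13 /hcube vertex_set_swap13.
Qed.
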